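(* Every Halin graph is $(3,1)$-choosable.
   Context: A Halin graph is a planar graph constructed from a planar drawing of a tree with at least four vertices and no vertices of degree two by connecting its leaves by a cycle that crosses none of its edges. A $(k,d)$-list assignment for a graph $G$ assigns to each vertex $v$ a list $L(v)$ of at least $k$ colors such that $|L(x)\cap L(y)|\le d$ whenever $x$ and $y$ are adjacent; $G$ is $(k,d)$-choosable if for every $(k,d)$-list assignment $L$ there is a proper vertex coloring $\varphi$ with $\varphi(v)\in L(v)$ for all $v$. *)

From mathcomp Require Import all_boot.
Set Implicit Arguments. Unset Strict Implicit. Unset Printing Implicit Defensive.

Definition simple_graph (T : finType) (e : rel T) : Prop :=
  (forall x y, e x y = e y x) /\ (forall x, ~~ e x x).

Definition deg (T : finType) (e : rel T) (v : T) : nat := #|[set u | e v u]|.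

(* A tree: a connected simple graph with |V| - 1 edges (edges counted as
   ordered pairs, hence the factor 2). *)
Definition is_tree (T : finType) (t : rel T) : Prop :=
  simple_graph t /\ (forall x y, connect t x y) /\
  #|[set p : T * T | t p.1 p.2]| = 2 * (#|T| - 1).

Definition is_leaf (T : finType) (t : rel T) (v : T) : bool := deg t v == 1.

Definition del_edge (T : finType) (t : rel T) (u v : T) : rel T :=
  fun x y => t x y && ~~ (((x == u) && (y == v)) || ((x == v) && (y == u))).

Definition cyclic_arc (T : finType) (s : seq T) (A : pred T) : Prop :=
  exists i k, forall x, (x \in take k (rot i s)) = A x.

(* The cyclic order s of the leaves of t is the one induced by a planar
   drawing of t with the leaves on a closed curve crossing no tree edge:
   for every tree edge uv, the leaves on u's side of uv form an arc of s. *)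
Definition planar_leaf_order (T : finType) (t : rel T) (s : seq T) : Prop :=
  forall u v, t u v ->
    cyclic_arc s (fun w => is_leaf t w && connect (del_edge t u v) u w).

Definition halin (T : finType) (e : rel T) : Prop :=
  exists (t : rel T) (s : seq T),
    [/\ is_tree t, 4 <= #|T| & (forall v, deg t v != 2)] /\
    [/\ uniq s, (forall v, (v \in s) = is_leaf t v),
        planar_leaf_order t s &
        forall x y, e x y =
          t x y || [&& x \in s, y \in s & (next s x == y) || (next s y == x)]].

Definition kd_list_assignment (T : finType) (e : rel T) (k d : nat)
    (L : T -> seq nat) : Prop :=
  (forall v, k <= size (undup (L v))) /\
  (forall x y, e x y -> size [seq c <- undup (L x) | c \in L y] <= d).

Definition L_colorable (T : finType) (e : rel T) (L : T -> seq nat) : Prop :=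
  exists f : T -> nat, (forall v, f v \in L v) /\ (forall x y, e x y -> f x != f y).

Definition kd_choosable (T : finType) (e : rel T) (k d : nat) : Prop :=
  forall L, kd_list_assignment e k d L -> L_colorable e L.

From mathcomp Require Import all_boot zify.
Set Implicit Arguments. Unset Strict Implicit. Unset Printing Implicit Defensive.

(* Induced subgraphs of a tree have fewer edges than vertices, so
   trees are 1-degenerate and can be coloured from any lists of size 2; keep
   such a colouring on the internal vertices.  In a tree with at least three
   vertices each leaf has exactly one neighbour, and it is internal, so every
   leaf has one colour forbidden by its parent.  Along the leaf cycle
   x0, x1, ..., xm give x0 a colour avoiding its parent's colour and the at most
   one colour that L(x0) shares with L(xm); then colour x1, ..., xm greedily,
   each avoiding its parent and its predecessor.  The colour of xm lies in L(xm),
   which misses the colour of x0. *)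

Lemma fresh_color (A : eqType) (u w : seq A) :
  size w < size (undup u) -> exists2 c, c \in u & c \notin w.
Proof.
move=> lt_wu; have /hasP [c] : has [predC w] (undup u).
  apply/hasPn => /= sub_uw; move: lt_wu; rewrite ltnNge.
  by rewrite uniq_leq_size ?undup_uniq // => c /sub_uw /negPn.
by rewrite mem_undup; exists c.
Qed.

Section DegenerateColoring.
Variables (T : finType) (r : rel T) (k : nat).
Hypothesis r_simple : simple_graph r.
Hypothesis r_degenerate : forall S : {set T}, S != set0 ->
  exists2 x, x \in S & #|[set y in S | r x y]| <= k.

Lemma degenerate_L_colorable (L : T -> seq nat) :
  (forall v, k < size (undup (L v))) -> L_colorable r L.
Proof.
have [r_sym r_irr] := r_simple.
move=> L_big; suff /(_ [set: T]) [f [fL f_proper]] : forall S : {set T},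
    exists f : T -> nat, {in S, forall v, f v \in L v} /\
                         {in S &, forall x y, r x y -> f x != f y}.
  by exists f; split=> [v | x y]; [apply: fL | apply: f_proper].
move=> S; move cardS: #|S| => n; elim: n S cardS => [|n IHn] S cardS.
  by exists (fun _ => 0); rewrite (cards0_eq cardS); split=> ?; rewrite inE.
have [x xS deg_x] : exists2 x, x \in S & #|[set y in S | r x y]| <= k.
  by apply: r_degenerate; rewrite -card_gt0 cardS.
have [f [fL f_proper]] : exists f : T -> nat, {in S :\ x, forall v, f v \in L v} /\
    {in S :\ x &, forall x y, r x y -> f x != f y}.
  by apply: IHn; move: cardS; rewrite (cardsD1 x) xS => -[].
have [c cL c_fresh] : exists2 c, c \in L x & c \notin [seq f y | y in [set y in S | r x y]].
  by apply: fresh_color; rewrite size_image; apply: leq_ltn_trans deg_x _.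
have nbr_fresh y : y \in S -> r x y -> c != f y.
  by move=> yS rxy; apply: contra c_fresh => /eqP ->; apply: image_f; rewrite inE yS.
exists (fun v => if v == x then c else f v); split.
  by move=> v vS; case: eqVneq => [-> // | vx]; apply: fL; rewrite !inE vx.
move=> a b aS bS rab; case: (eqVneq a x) => [ax | ax]; case: (eqVneq b x) => [bx | bx].
- by move: rab; rewrite ax bx (negbTE (r_irr x)).
- by rewrite nbr_fresh // -ax.
- by rewrite eq_sym nbr_fresh // r_sym -bx.
- by rewrite f_proper // !inE ?ax ?bx.
Qed.

End DegenerateColoring.

Section Tree.
Variables (T : finType) (t : rel T).

Definition arcs := [set p : T * T | t p.1 p.2].

Lemma sum_card_nbhs_in (S : {set T}) :
  \sum_(x in S) #|[set y in S | t x y]| = #|arcs :&: setX S S|.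
Proof.
rewrite -sum1_card (eq_bigl (fun p => (p.1 \in S) && ((p.2 \in S) && t p.1 p.2))).
  rewrite -(pair_big_dep _ (fun x y => (y \in S) && t x y) (fun _ _ => 1)).
  by apply: eq_bigr => x _; rewrite -sum1_card; apply: eq_bigl => y; rewrite inE.
by move=> [x y]; rewrite !inE /= andbC -andbA.
Qed.

Lemma sum_deg : \sum_v deg t v = #|arcs|.
Proof.
have -> : arcs = arcs :&: setX setT setT by apply/setP => -[x y]; rewrite !inE ?andbT.
rewrite -sum_card_nbhs_in; apply: eq_big => [v | v _]; first by rewrite inE.
by apply: eq_card => y; rewrite !inE.
Qed.

Definition parent (x : T) : T := odflt x [pick y | t x y].

Lemma leaf_adjE x y : is_leaf t x -> t x y = (y == parent x).
Proof.
move=> /cards1P [p nbhs_x].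
have adjE z : t x z = (z == p) by rewrite -in_set1 -nbhs_x inE.
rewrite /parent adjE; case: pickP => [z | /(_ p)]; first by rewrite adjE => /eqP ->.
by rewrite adjE eqxx.
Qed.

Hypothesis t_sym : forall x y, t x y = t y x.
Hypothesis t_conn : forall x y, connect t x y.

Lemma exists_arc_into (S : {set T}) a b : a \in S -> b \notin S ->
  exists x y, [/\ t x y, x \notin S & y \in S].
Proof.
move=> aS bS; case: (boolP [exists x, exists y, [&& t x y, x \notin S & y \in S]]).
  by move=> /existsP [x /existsP [y /and3P [? ? ?]]]; exists x, y.
move=> /existsPn no_arc_into; have S_closed : closed t (mem S).
  suff arc_from x y : t x y -> x \in S -> y \in S.
    by move=> x y txy; apply/idP/idP; apply: arc_from; rewrite // t_sym.
  move=> txy xS; apply/negPn/negP => yS.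
  by have /existsPn /(_ x) := no_arc_into y; rewrite t_sym txy yS xS.
by move: bS; rewrite -(closed_connect S_closed (t_conn a b)) aS.
Qed.

Lemma card_arcs_leaving (S : {set T}) :
  S != set0 -> 2 * #|~: S| <= #|arcs :\: setX S S|.
Proof.
move cardSC: #|~: S| => n; elim: n S cardSC => // n IHn S cardSC S0.
have [b] : exists b, b \in ~: S by apply/card_gt0P; rewrite cardSC.
rewrite inE => bS; have [a aS] := set0Pn _ S0.
have [x [y [txy xS yS]]] := exists_arc_into aS bS.
have cardxSC : #|~: (x |: S)| = n.
  by move: (cardsC S) (cardsC (x |: S)); rewrite cardsU1 xS cardSC; lia.
have xS0 : x |: S != set0 by apply/set0Pn; exists x; rewrite setU11.
have new_arcs : (x, y) |: ((y, x) |: (arcs :\: setX (x |: S) (x |: S)))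
                \subset arcs :\: setX S S.
  apply/subsetP => -[u v]; rewrite !inE /= => /or3P [/eqP [-> ->] | /eqP [-> ->] |].
  - by rewrite (negbTE xS) txy.
  - by rewrite t_sym txy (negbTE xS) andbF.
  - by case/andP=> uvNxS ->; rewrite andbT; apply: contra uvNxS => /andP [-> ->]; rewrite !orbT.
have := subset_leq_card new_arcs; rewrite !cardsU1 !inE /= eqxx yS /= !orbT orbF.
have -> /= : (x, y) != (y, x) by apply/eqP => -[xy _]; rewrite xy yS in xS.
by move=> card_le; apply: leq_trans card_le; rewrite mulnS !add1n; apply: IHn.
Qed.

Lemma deg_gt0 v : 1 < #|T| -> 0 < deg t v.
Proof.
move=> T_gt1; have [w] : exists w, w \in predC1 v.
  by apply/card_gt0P; rewrite cardC1 -subn1 subn_gt0.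
rewrite !inE => wv; case/connectP: (t_conn v w) => -[|u p] /= => [_ wE | /andP [tvu _] _].
  by rewrite wE eqxx in wv.
by apply/card_gt0P; exists u; rewrite inE.
Qed.

Lemma leaf_adj_not_leaf x y : 2 < #|T| -> is_leaf t x -> t x y -> ~~ is_leaf t y.
Proof.
move=> T_gt2 x_leaf txy; apply: contraTN T_gt2 => y_leaf; rewrite -leqNgt.
have leaf_nbr a b c : is_leaf t a -> t a b -> t a c -> b = c.
  by move=> /leaf_adjE adjE; rewrite !adjE => /eqP -> /eqP ->.
have adj_xy a b : a \in [set x; y] -> t a b -> b \in [set x; y].
  rewrite !inE => /orP [] /eqP -> tab.
    by rewrite (leaf_nbr x b y) ?eqxx ?orbT.
  by rewrite (leaf_nbr y b x) ?eqxx // t_sym.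
have xy_closed : closed t (mem [set x; y]).
  by move=> a b tab; apply/idP/idP => /adj_xy; apply; rewrite // t_sym.
have -> : #|T| = #|[set x; y]|.
  by apply: eq_card => w; rewrite -(closed_connect xy_closed (t_conn x w)) !inE eqxx.
by rewrite cards2 ltnS leq_b1.
Qed.

Hypothesis t_arcs : #|arcs| = 2 * (#|T| - 1).

Lemma card_arcs_in (S : {set T}) : S != set0 -> #|arcs :&: setX S S| + 2 <= 2 * #|S|.
Proof.
move=> S0; have := cardsID (setX S S) arcs; rewrite t_arcs.
move: (card_arcs_leaving S0) (cardsC S) (card_gt0 S); rewrite S0; lia.
Qed.

Lemma tree_degenerate (S : {set T}) :
  S != set0 -> exists2 x, x \in S & #|[set y in S | t x y]| <= 1.
Proof.
move=> S0; apply/exists_inP; apply: contraT => /exists_inPn nbhs_big.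
have : 2 * #|S| <= \sum_(x in S) #|[set y in S | t x y]|.
  by rewrite mulnC -sum_nat_const; apply: leq_sum => x /nbhs_big; rewrite -ltnNge.
by rewrite sum_card_nbhs_in; move: (card_arcs_in S0); lia.
Qed.

Lemma two_leaves : 1 < #|T| -> 2 <= #|[set v | is_leaf t v]|.
Proof.
move=> T_gt1; have : 2 * #|T| <= \sum_v (deg t v + is_leaf t v).
  rewrite mulnC -sum_nat_const; apply: leq_sum => v _; have := deg_gt0 v T_gt1.
  by rewrite /is_leaf; case: eqP => [-> | deg_neq1 deg_pos] //=; lia.
rewrite big_split /= sum_deg t_arcs.
have -> : \sum_v (is_leaf t v : nat) = #|[set v | is_leaf t v]|.
  by rewrite -sum1_card [RHS]big_mkcond; apply: eq_bigr => v _; rewrite inE; case: is_leaf.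
(* [t_arcs] and [T_gt1] elaborate [#|T|] differently; [set] makes it one [lia] atom. *)
by set n := #|T| in T_gt1 *; lia.
Qed.

End Tree.

Section CycleColoring.
Variables (T : eqType) (L : T -> seq nat) (h : T -> nat).
Hypothesis L_big : forall v, 2 < size (undup (L v)).

Lemma path_list_coloring (q : seq T) x0 c0 : uniq q -> x0 \notin q ->
  exists g : T -> nat, [/\ g x0 = c0, {in q, forall y, g y \in L y /\ g y != h y}
                         & path (fun a b => g a != g b) x0 q].
Proof.
elim: q x0 c0 => [|y q IHq] x0 c0; first by exists (fun _ => c0).
rewrite /= inE negb_or => /andP [yNq q_uniq] /andP [x0Ny x0Nq].
have yx0F : (y == x0) = false by rewrite eq_sym (negbTE x0Ny).
have [c cL c_fresh] : exists2 c, c \in L y & c \notin [:: c0; h y].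
  exact/fresh_color/(leq_trans _ (L_big y)).
have [g [gy gL g_path]] := IHq y c q_uniq yNq.
exists (fun z => if z == x0 then c0 else g z); split.
- by rewrite eqxx.
- move=> z; rewrite inE => /orP [/eqP -> | zq]; last first.
    by rewrite ifN; [apply: gL | apply: contraNneq x0Nq => <-].
  by rewrite yx0F gy cL; move: c_fresh; rewrite !inE negb_or => /andP [].
- rewrite /= eqxx yx0F gy; apply/andP; split.
    by move: c_fresh; rewrite !inE negb_or eq_sym => /andP [].
  rewrite (@eq_in_path _ (predC1 x0) _ (fun a b => g a != g b)) //.
    by move=> a b /= /negbTE -> /negbTE ->.
  by rewrite /= yx0F; apply/allP => z zq /=; apply: contraNneq x0Nq => <-.
Qed.

Lemma cycle_list_coloring (s : seq T) : uniq s -> 1 < size s ->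
  (forall x, x \in s -> size [seq c <- undup (L x) | c \in L (next s x)] <= 1) ->
  exists g : T -> nat, {in s, forall v, g v \in L v /\ g v != h v}
                       /\ cycle (fun a b => g a != g b) s.
Proof.
case: s => [|x0 q] // s_uniq q_gt0 meet_small.
have xl_q : last x0 q \in q by case: q q_gt0 {s_uniq meet_small} => // y q _ /=; apply: mem_last.
set xl := last x0 q in xl_q *.
have next_xl : next (x0 :: q) xl = x0.
  by have /= := cycle_next s_uniq; rewrite rcons_path => /andP [_ /eqP].
have [c cL c_fresh] : exists2 c, c \in L x0 &
    c \notin h x0 :: [seq c <- undup (L xl) | c \in L x0].
  apply: fresh_color; apply: leq_ltn_trans (L_big x0).
  by have := meet_small xl; rewrite inE xl_q orbT next_xl; apply.
have cNLxl : c \notin L xl.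
  by apply: contra c_fresh => c_xl; rewrite inE mem_filter cL mem_undup c_xl orbT.
move: s_uniq => /= /andP [x0Nq q_uniq].
have [g [gx0 gL g_path]] := path_list_coloring c q_uniq x0Nq.
exists g; split.
  move=> v; rewrite inE => /orP [/eqP -> | /gL //]; rewrite gx0 cL; split=> //.
  by move: c_fresh; rewrite inE negb_or => /andP [].
rewrite /= rcons_path g_path gx0 /=; apply: contra cNLxl => /eqP <-.
by case: (gL _ xl_q).
Qed.

End CycleColoring.

Theorem proposition2 (T : finType) (e : rel T) :
  halin e -> kd_choosable e 3 1.
Proof.
move=> [t [s [[t_tree T_ge4 _] [s_uniq s_leaves _ eE]]]] L [L_big L_meet].
have [t_simple [t_conn t_arcs]] := t_tree; have [t_sym _] := t_simple.
have T_gt2 : 2 < #|T| by apply: leq_trans T_ge4.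
have [f [fL f_proper]] : L_colorable t L.
  by apply: (degenerate_L_colorable t_simple (tree_degenerate t_sym t_conn t_arcs)) => v; exact: ltnW.
have s_size : 1 < size s.
  rewrite -(card_uniqP s_uniq) (eq_card (B := [set v | is_leaf t v])) => [|v]; last by rewrite inE.
  exact: two_leaves t_conn t_arcs (ltnW T_gt2).
have e_next x : x \in s -> e x (next s x) by move=> xs; rewrite eE mem_next xs eqxx !orbT.
have [g [gL g_cycle]] := cycle_list_coloring (fun v => f (parent t v)) L_big s_uniq s_size
  (fun x xs => L_meet _ _ (e_next x xs)).
pose phi v := if v \in s then g v else f v.
have leaf_arc x y : x \in s -> t x y -> phi x != phi y.
  move=> xs txy; have x_leaf : is_leaf t x by rewrite -s_leaves.
  have yNs : y \notin s by rewrite s_leaves (leaf_adj_not_leaf t_sym t_conn T_gt2 x_leaf).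
  move: txy; rewrite /phi xs (negbTE yNs) (leaf_adjE _ x_leaf) => /eqP ->.
  by case: (gL x xs).
exists phi; split=> [v | x y]; first by rewrite /phi; case: ifP => [/gL [] | _].
rewrite eE => /orP [txy | /and3P [xs ys /orP [] /eqP <-]].
- have [xs | xNs] := boolP (x \in s); first exact: leaf_arc.
  have [ys | yNs] := boolP (y \in s); first by rewrite eq_sym leaf_arc // t_sym.
  by rewrite /phi (negbTE xNs) (negbTE yNs) f_proper.
- by rewrite /phi xs mem_next xs (next_cycle g_cycle).
- by rewrite /phi ys mem_next ys eq_sym (next_cycle g_cycle).
Qed.
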